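(* Let $a,b,c,d$ be nonnegative integers and let $\kappa,\lambda\subseteq\Box_{a+c,b+d}$ be partitions with $\ell(\kappa)\le a$ and $\lambda_1\le b$. Work in the cohomology ring of $G(a+c,b+d)$. (1) If $|\kappa|+|\lambda|>ad+ab+cb$, then $\sigma_\kappa\cdot\sigma_\lambda=0$. (2) If $|\kappa|+|\lambda|=ad+ab+cb$ and $\sigma_\kappa\cdot\sigma_\lambda\neq0$, then $\sigma_\kappa\cdot\sigma_\lambda=\sigma_{\Box_{c,d}^\vee}$, where $\Box_{c,d}^\vee$ is the complement of $\Box_{c,d}$ in $\Box_{a+c,b+d}$ (the partition with $a$ parts equal to $b+d$ followed by $c$ parts equal to $b$), and there is a partition $\alpha\subseteq\Box_{a,b}$ such that $\kappa=\Box_{a,d}+\alpha$ and $\lambda=(\Box_{c,b},\alpha^\vee)$, where $\alpha^\vee$ is the complement of $\alpha$ in $\Box_{a,b}$.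
   Context: Partitions: weakly decreasing finite sequences of positive integers $\lambda_1\ge\dots\ge\lambda_k>0$, with $\lambda_i:=0$ for $i>k$, $\ell(\lambda)=k$, $|\lambda|=\sum\lambda_i$; $\lambda\subseteq\mu$ means $\lambda_i\le\mu_i$ for all $i$. $\Box_{a,b}$ is the partition with $a$ parts equal to $b$. $\mu+\nu$ has $k$-th part $\mu_k+\nu_k$; $(\mu,\nu)$ is the decreasing rearrangement of the concatenated parts of $\mu$ and $\nu$. For $\lambda\subseteq\Box_{a,b}$, its complement in $\Box_{a,b}$ is the partition $\lambda^\vee\subseteq\Box_{a,b}$ with $\lambda^\vee_i=b-\lambda_{a+1-i}$ for $i=1,\dots,a$. $G(a,b)$ is the Grassmannian of $a$-dimensional subspaces of $\mathbb{C}^{a+b}$. Its cohomology ring has $\mathbb{Z}$-basis the Schubert classes $\sigma_\lambda$, $\lambda\subseteq\Box_{a,b}$ (the class of the Schubert variety $\Omega_\lambda F_\bullet=\{H: \dim H\cap F_{b+i-\lambda_i}\ge i,\ i=1,\dots,a\}$ for a complete flag $F_\bullet$); the map from symmetric functions sending the Schur function $S_\lambda$ to $\sigma_\lambda$ if $\lambda\subseteq\Box_{a,b}$ and to $0$ otherwise is a surjective ring homomorphism, so products of Schubert classes are computed by Littlewood-Richardson coefficients, discarding partitions not contained in $\Box_{a,b}$. $\sigma_{\Box_{a,b}}$ is the class of a point. *)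

From mathcomp Require Import all_boot.
Set Implicit Arguments. Unset Strict Implicit. Unset Printing Implicit Defensive.

(** Partitions are represented as [seq nat]: weakly decreasing, all parts > 0.
    [nth 0 l i] is the (i+1)-th part (so parts beyond the length are 0). *)
Definition is_partition (l : seq nat) : bool :=
  sorted (fun x y => y <= x) l && all (fun x => 0 < x) l.

Definition psize (l : seq nat) : nat := sumn l.

Definition subpart (l m : seq nat) : bool :=
  all (fun i => nth 0 l i <= nth 0 m i) (iota 0 (maxn (size l) (size m))).

Definition box (a b : nat) : seq nat := if b is 0 then [::] else nseq a b.

Definition compl (a b : nat) (l : seq nat) : seq nat :=
  [seq x <- [seq b - nth 0 l (a - 1 - i) | i <- iota 0 a] | 0 < x].

Definition padd (m n : seq nat) : seq nat :=
  mkseq (fun i => nth 0 m i + nth 0 n i) (maxn (size m) (size n)).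

Definition pcat (m n : seq nat) : seq nat := sort (fun x y => y <= x) (m ++ n).

(** A filling T of the skew shape nu/lam is a list of rows; row i (0-based) fills
    the cells (i, j) with lam_i <= j < nu_i, left to right. *)

Definition entry (lam : seq nat) (T : seq (seq nat)) (i j : nat) : nat :=
  nth 0 (nth [::] T i) (j - nth 0 lam i).

Definition reading_word (T : seq (seq nat)) : seq nat := flatten (map rev T).

Definition lattice_word (n : nat) (w : seq nat) : bool :=
  all (fun p => all (fun k => count_mem k.+2 (take p w) <= count_mem k.+1 (take p w))
                    (iota 0 n))
      (iota 0 (size w).+1).

Definition LR_tableau (lam mu nu : seq nat) (T : seq (seq nat)) : bool :=
  [&& subpart lam nu,
      size T == size nu,
      all (fun i => size (nth [::] T i) == nth 0 nu i - nth 0 lam i) (iota 0 (size nu)),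
      all (sorted leq) T,
      (* columns strictly increasing *)
      all (fun i => all (fun j => (nth 0 lam i <= j) ==> (nth 0 lam i.+1 <= j) ==>
                                   (entry lam T i j < entry lam T i.+1 j))
                        (iota 0 (nth 0 nu i.+1)))
          (iota 0 (size nu).-1),
      0 \notin flatten T,
      all (fun k => count_mem k.+1 (flatten T) == nth 0 mu k)
          (iota 0 (maxn (size mu) (foldr maxn 0 (flatten T)))) &
      lattice_word (foldr maxn 0 (flatten T)) (reading_word T)].

Fixpoint words (k n : nat) : seq (seq nat) :=
  if k is k'.+1 then [seq x :: w | x <- iota 1 n, w <- words k' n] else [:: [::]].

Fixpoint fillings (rs : seq nat) (n : nat) : seq (seq (seq nat)) :=
  if rs is r :: rs' then [seq w :: T | w <- words r n, T <- fillings rs' n]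
  else [:: [::]].

Definition LRcoef (lam mu nu : seq nat) : nat :=
  if subpart lam nu then
    count (LR_tableau lam mu nu)
      (fillings [seq nth 0 nu i - nth 0 lam i | i <- iota 0 (size nu)] (size mu))
  else 0.

(** ---- Cohomology of G(n,m) in the Schubert basis sigma_nu, nu ⊆ Box_{n,m}.
    An element is represented by its coefficient function on partitions. *)

Definition sigma (n m : nat) (mu : seq nat) (nu : seq nat) : nat :=
  [&& nu == mu & subpart mu (box n m)].

(** coefficient of sigma_nu in sigma_kap . sigma_lam: the LR coefficient,
    discarding partitions not contained in Box_{n,m}. *)
Definition cup (n m : nat) (kap lam : seq nat) (nu : seq nat) : nat :=
  if is_partition nu && subpart nu (box n m) then LRcoef kap lam nu else 0.

(* Let T be an LR tableau of shape nu/kap and content lam.  Reading row i from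
   the right, the lattice condition matches each entry v+1 in rows 1..i with an
   entry v in rows 1..i-1, so row i is no longer than the number of 1s in rows
   1..i; hence nu_i - kap_i <= lam_1 <= b.  As kap_i = 0 for i > a, nu then lies
   inside the complement N of Box_{c,d} in Box_{a+c,b+d}, and
   |kap| + |lam| = |nu| <= |N| = ad + ab + cb, with equality only for nu = N.
   For nu = N, column strictness bounds the number of 1s in rows 1..i by
   N_1 - kap_i, which (with lam_1 <= b) is the length of row i.  So every row is
   as long as the 1s allow, which forces rows 1..i to contain exactly as many
   entries v as row i+1-v has cells: the tableau is determined by its shape, the
   coefficient is 1, and its content reads kap = Box_{a,d} + alpha and
   lam = (Box_{c,b}, alpha^vee). *)

From mathcomp Require Import all_boot.
From mathcomp Require Import zify.
Set Implicit Arguments. Unset Strict Implicit. Unset Printing Implicit Defensive.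

Local Notation geq_trans := (rev_trans leq_trans).

Lemma subpartP l m : reflect (forall i, nth 0 l i <= nth 0 m i) (subpart l m).
Proof.
apply: (iffP allP) => [le_lm i | le_lm i _]; last exact: le_lm.
have [lt_i_max|max_le_i] := ltnP i (maxn (size l) (size m)).
  by apply: le_lm; rewrite mem_iota.
by rewrite nth_default //; apply: leq_trans max_le_i; apply: leq_maxl.
Qed.

Lemma nth_box n m i : nth 0 (box n m) i = if i < n then m else 0.
Proof. by case: m => [|m] /=; [rewrite nth_nil; case: ifP | rewrite nth_nseq]. Qed.

Lemma eq_from_nth0 (s1 s2 : seq nat) :
  all (fun x => 0 < x) s1 -> all (fun x => 0 < x) s2 ->
  (forall i, nth 0 s1 i = nth 0 s2 i) -> s1 = s2.
Proof.
elim: s1 s2 => [|x s1 IH] [|y s2] //= => [_ /andP[y_gt0 _]|/andP[x_gt0 _] _|].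
- by move=> /(_ 0) /= y0; rewrite -y0 in y_gt0.
- by move=> /(_ 0) /= x0; rewrite x0 in x_gt0.
move=> /andP[_ s1_pos] /andP[_ s2_pos] eq_nth.
by rewrite [x](eq_nth 0) (IH s2) // => i; apply: (eq_nth i.+1).
Qed.

Lemma size_gt_nth0 (s : seq nat) i :
  all (fun x => 0 < x) s -> (i < size s) = (0 < nth 0 s i).
Proof.
move=> /allP s_pos; have [lt_i_s|] := ltnP i (size s); last by move/(nth_default 0)->.
by rewrite s_pos // mem_nth.
Qed.

Lemma all_pos_nth (s : seq nat) :
  (forall i, i < size s -> 0 < nth 0 s i) -> all (fun x => 0 < x) s.
Proof. by move=> s_pos; apply/(all_nthP 0). Qed.

Lemma sorted_geq_nth (s : seq nat) i j :
  sorted (fun x y => y <= x) s -> i <= j -> nth 0 s j <= nth 0 s i.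
Proof.
move=> s_sorted le_ij; have [lt_j_s|] := ltnP j (size s); last by move/(nth_default 0)->.
apply: (sorted_leq_nth geq_trans _ 0 s_sorted) => //; rewrite inE //.
exact: leq_ltn_trans lt_j_s.
Qed.

Lemma box_sorted n m : sorted (fun x y => y <= x) (box n m).
Proof.
case: m => [|m] //=; apply/(sortedP 0) => k; rewrite size_nseq !nth_nseq => lt_k1_n.
by rewrite lt_k1_n (ltnW lt_k1_n).
Qed.

Lemma nth_filter_pos (s : seq nat) i : sorted (fun x y => y <= x) s ->
  nth 0 [seq x <- s | 0 < x] i = nth 0 s i.
Proof.
elim: s i => [|x s IH] i //= s_sorted; have {}IH := IH _ (path_sorted s_sorted).
have [x0|x_gt0] := posnP x; last by case: i.
have s0 j : nth 0 s j = 0.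
  have [lt_j_s|] := ltnP j (size s); last by move/(nth_default 0)->.
  apply/eqP; rewrite -leqn0 -x0; apply: (allP (order_path_min geq_trans s_sorted)).
  exact: mem_nth.
by rewrite IH x0; case: i => [|i] /=; rewrite s0.
Qed.

Lemma size_subpart (l m : seq nat) :
  all (fun x => 0 < x) l -> subpart l m -> size l <= size m.
Proof.
move=> l_pos /subpartP le_lm; rewrite leqNgt; apply/negP => /[dup] lt_m_l.
rewrite (size_gt_nth0 _ l_pos); have := le_lm (size m).
by rewrite (nth_default 0 (leqnn _)) leqn0 => /eqP->.
Qed.

Lemma sumn_nth (s : seq nat) n : size s <= n -> sumn s = \sum_(0 <= i < n) nth 0 s i.
Proof.
elim: s n => [|x s IH] n /=; first by rewrite big1 // => i _; rewrite nth_nil.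
by case: n => [|n] // le_s_n; rewrite big_nat_recl // (IH n).
Qed.

Lemma eq_leq_sum (r : seq nat) (f g : nat -> nat) :
  (forall k, f k <= g k) -> \sum_(k <- r) f k = \sum_(k <- r) g k ->
  forall k, k \in r -> f k = g k.
Proof.
move=> le_fg; elim: r => [|x r IH] //; rewrite !big_cons => eq_sum k.
have le_sum : \sum_(k <- r) f k <= \sum_(k <- r) g k by apply: leq_sum.
have := le_fg x; rewrite in_cons => le_x /orP[/eqP->|r_k]; first lia.
by apply: IH => //; lia.
Qed.

Lemma sum_count_mem (s : seq nat) K : (forall x, x \in s -> 0 < x <= K) ->
  \sum_(0 <= k < K) count_mem k.+1 s = size s.
Proof.
elim: s => [|x s IH] s_range /=; first by rewrite big1.
rewrite big_split /= IH => [|y s_y]; last by apply: s_range; rewrite in_cons s_y orbT.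
suff -> : \sum_(0 <= k < K) (x == k.+1) = 1 by rewrite add1n.
have := s_range x (mem_head x s); case: x {s_range} => // x /= lt_x_K.
rewrite (eq_bigr (fun k => if k == x then 1 else 0)) => [|k _]; last first.
  by rewrite eqSS eq_sym; case: eqP.
by rewrite -big_mkcond big_nat1_eq /= lt_x_K.
Qed.

Lemma leq_foldr_maxn (s : seq nat) x : x \in s -> x <= foldr maxn 0 s.
Proof.
elim: s => [|y s IH] //=; rewrite in_cons leq_max => /orP[/eqP->|s_x].
  by rewrite leqnn.
by rewrite IH ?orbT.
Qed.

Lemma take_count_sorted (s : seq nat) t : sorted (fun x y => y <= x) s ->
  take (count (fun x => t < x) s) s = [seq x <- s | t < x].
Proof.
elim: s => [|x s IH] //= s_sorted.
have [lt_t_x|le_x_t] := ltnP t x.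
  by rewrite add1n /= IH // (path_sorted s_sorted).
have small : {in s, (fun x => t < x) =1 pred0}.
  move=> y s_y /=; apply/negbTE; rewrite -leqNgt; apply: leq_trans le_x_t.
  exact: (allP (order_path_min geq_trans s_sorted)).
by rewrite (eq_in_count small) (eq_in_filter small) count_pred0 filter_pred0 take0.
Qed.

Lemma count_mem1_sorted (r : seq nat) g :
  sorted leq r -> all (fun x => 0 < x) r -> g < size r -> 1 < nth 0 r g ->
  count_mem 1 r <= g.
Proof.
elim: r g => [|x r IH] g //= r_sorted /andP[x_gt0 r_pos].
case: g => [_ /= lt_1_x|g /= lt_g_r lt_1_rg].
  rewrite leqn0 -/(count_mem 1 (x :: r)); apply/eqP/count_memPn.
  rewrite in_cons negb_or neq_ltn lt_1_x /=; apply/negP.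
  by move=> /(allP (order_path_min leq_trans r_sorted)); rewrite leqNgt lt_1_x.
have := IH g (path_sorted r_sorted) r_pos lt_g_r lt_1_rg; case: (x == 1) => /=; lia.
Qed.

Lemma perm_reading_word (T : seq (seq nat)) : perm_eq (reading_word T) (flatten T).
Proof. by elim: T => //= r T IH; apply: perm_cat; rewrite ?perm_rev. Qed.

Definition prefix_count (T : seq (seq nat)) i v := count_mem v (flatten (take i T)).

Lemma prefix_count_rcons (T : seq (seq nat)) i v : i < size T ->
  prefix_count T i.+1 v = prefix_count T i v + count_mem v (nth [::] T i).
Proof.
by move=> lt_i_T; rewrite /prefix_count (take_nth [::] lt_i_T) flatten_rcons count_cat.
Qed.

Lemma prefix_count_size (T : seq (seq nat)) v :
  prefix_count T (size T) v = count_mem v (flatten T).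
Proof. by rewrite /prefix_count take_size. Qed.

Lemma prefix_count_le (T : seq (seq nat)) i v :
  prefix_count T i v <= count_mem v (flatten T).
Proof. by rewrite /prefix_count -{2}(cat_take_drop i T) flatten_cat count_cat leq_addr. Qed.

Lemma mem_flatten_take (T : seq (seq nat)) i x :
  x \in flatten (take i T) -> x \in flatten T.
Proof. by rewrite -{2}(cat_take_drop i T) flatten_cat mem_cat => ->. Qed.

Lemma count_mem_row (T : seq (seq nat)) i v : i < size T ->
  count_mem v (nth [::] T i) = prefix_count T i.+1 v - prefix_count T i v.
Proof. by move=> lt_i_T; rewrite prefix_count_rcons // addKn. Qed.

Section LRTableau.
Variables (kap lam nu : seq nat) (T : seq (seq nat)).
Hypothesis T_LR : LR_tableau kap lam nu T.

Local Notation row i := (nth [::] T i).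
Local Notation max_entry := (foldr maxn 0 (flatten T)).
Local Notation P := (prefix_count T).

Lemma LR_subpart : subpart kap nu.
Proof. by case/and5P: T_LR. Qed.

Lemma LR_size : size T = size nu.
Proof. by case/and5P: T_LR => _ /eqP. Qed.

Lemma LR_size_row i : size (row i) = nth 0 nu i - nth 0 kap i.
Proof.
have [lt_i_nu|le_nu_i] := ltnP i (size nu).
  by case/and5P: T_LR => _ _ /allP/(_ i); rewrite mem_iota => /(_ lt_i_nu)/eqP.
by rewrite (nth_default 0 le_nu_i) nth_default ?LR_size.
Qed.

Lemma LR_row_sorted i : sorted leq (row i).
Proof.
case/and5P: T_LR => _ _ _ /allP T_sorted _.
by have [/(mem_nth [::])/T_sorted|/(nth_default [::])->] := ltnP i (size T).
Qed.

Lemma LR_column_lt i j : i.+1 < size nu -> j < nth 0 nu i.+1 ->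
  nth 0 kap i <= j -> nth 0 kap i.+1 <= j -> entry kap T i j < entry kap T i.+1 j.
Proof.
case/and5P: T_LR => _ _ _ _ /and4P[/allP columns _ _ _] lt_i1_nu lt_j_nu le_kap_j le_kap1_j.
have /allP/(_ j) : all _ _ := columns i (ltac:(rewrite mem_iota; lia)).
by rewrite mem_iota lt_j_nu le_kap_j le_kap1_j; apply.
Qed.

Lemma LR_entry_range x : x \in flatten T -> 0 < x <= max_entry.
Proof.
case/and5P: T_LR => _ _ _ _ /and4P[_ T_pos _ _] T_x.
by rewrite leq_foldr_maxn // andbT lt0n; apply: contraTneq T_x => ->.
Qed.

Lemma LR_row_pos i : all (fun x => 0 < x) (row i).
Proof.
apply/allP => x row_x; have [lt_i_T|le_T_i] := ltnP i (size T).
  suff /LR_entry_range/andP[] : x \in flatten T by [].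
  by apply/flattenP; exists (row i); rewrite ?mem_nth.
by move: row_x; rewrite nth_default.
Qed.

Lemma LR_content k : count_mem k.+1 (flatten T) = nth 0 lam k.
Proof.
case/and5P: T_LR => _ _ _ _ /and4P[_ _ /allP content _].
have [lt_k|] := ltnP k (maxn (size lam) max_entry).
  by apply/eqP/content; rewrite mem_iota.
rewrite geq_max => /andP[le_lam_k le_max_k]; rewrite nth_default //.
by apply/count_memPn/negP => /LR_entry_range; lia.
Qed.

Lemma LR_lattice p v : 0 < v ->
  count_mem v.+1 (take p (reading_word T)) <= count_mem v (take p (reading_word T)).
Proof.
case/and5P: T_LR => _ _ _ _ /and4P[_ _ _ /allP lattice] v_gt0.
set w := reading_word T.
have w_T : w =i flatten T := perm_mem (perm_reading_word T).
suff le_p q : q <= size w -> count_mem v.+1 (take q w) <= count_mem v (take q w).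
  have [|/ltnW lt_w_p] := leqP p (size w); first exact: le_p.
  by rewrite take_oversize //; have := le_p _ (leqnn _); rewrite take_size.
move=> le_q_w; have /allP lat_q : all _ _ := lattice q (ltac:(by rewrite mem_iota ltnS)).
have [lt_v_max|le_max_v] := ltnP v.-1 max_entry.
  by have := lat_q v.-1; rewrite mem_iota lt_v_max prednK //; apply.
suff -> : count_mem v.+1 (take q w) = 0 by [].
by apply/count_memPn/negP => /mem_take; rewrite w_T => /LR_entry_range; lia.
Qed.

Lemma prefix_count0 i : P i 0 = 0.
Proof. by apply/count_memPn/negP => /mem_flatten_take/LR_entry_range. Qed.

Lemma prefix_count_gt_max i v : max_entry < v -> P i v = 0.
Proof. by move=> lt_max_v; apply/count_memPn/negP => /mem_flatten_take/LR_entry_range; lia. Qed.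

(* Row i is read right to left, so its entries > v come first in the reading
   word; the lattice condition at that point compares v.+1's and v's. *)
Lemma prefix_count_succ_le i v : i < size T -> 0 < v -> P i.+1 v.+1 <= P i v.
Proof.
move=> lt_i_T v_gt0.
set A := flatten (map rev (take i T)); set r := rev (row i).
have A_count x : count_mem x A = P i x by apply/permP/perm_reading_word.
have r_sorted : sorted (fun x y => y <= x) r by rewrite rev_sorted LR_row_sorted.
have word_prefix : take (size A + count (fun x => v < x) r) (reading_word T) =
                   A ++ [seq x <- r | v < x].
  rewrite /reading_word -{1}(cat_take_drop i T) map_cat flatten_cat (drop_nth [::] lt_i_T).
  by rewrite /= take_cat ltnNge leq_addr /= addKn takel_cat ?count_size // take_count_sorted.
have := LR_lattice (size A + count (fun x => v < x) r) v_gt0.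
rewrite word_prefix !count_cat !count_filter !A_count prefix_count_rcons // count_rev.
rewrite (@eq_count _ (predI _ _) (pred1 v.+1)) => [|x]; last by rewrite /= andb_idr // => /eqP->.
rewrite (@eq_count _ (predI _ _) pred0) ?count_pred0 ?addn0 // => x /=.
by case: eqP => // ->; rewrite ltnn.
Qed.

Lemma size_flatten_take i K : max_entry <= K ->
  size (flatten (take i T)) = \sum_(0 <= k < K) P i k.+1.
Proof.
move=> le_max_K; symmetry; apply: sum_count_mem => x /mem_flatten_take/LR_entry_range.
by case/andP=> -> /leq_trans->.
Qed.

Lemma row_size_balance i : i < size T ->
  size (row i) + \sum_(0 <= k < max_entry) P i k.+1 =
  P i.+1 1 + \sum_(0 <= k < max_entry) P i.+1 k.+2.
Proof.
move=> lt_i_T; rewrite -size_flatten_take //.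
rewrite -(big_nat_recl _ _ (fun k => P i.+1 k.+1)) // -size_flatten_take //.
by rewrite (take_nth [::] lt_i_T) flatten_rcons size_cat addnC.
Qed.

Lemma size_row_le_ones i : i < size T -> size (row i) <= P i.+1 1.
Proof.
move=> lt_i_T; have := row_size_balance lt_i_T.
have : \sum_(0 <= k < max_entry) P i.+1 k.+2 <= \sum_(0 <= k < max_entry) P i k.+1.
  by apply: leq_sum => k _; apply: prefix_count_succ_le.
lia.
Qed.

Lemma prefix_count_shift i : i < size T -> P i.+1 1 <= size (row i) ->
  forall v, 0 < v -> P i.+1 v.+1 = P i v.
Proof.
move=> lt_i_T le_ones_row v v_gt0.
have [lt_v_max|le_max_v] := ltnP v.-1 max_entry; last first.
  have lt_max_v : max_entry < v by rewrite -(prednK v_gt0) ltnS.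
  by rewrite !prefix_count_gt_max // ltnW.
have le_sum : \sum_(0 <= k < max_entry) P i.+1 k.+2 <= \sum_(0 <= k < max_entry) P i k.+1.
  by apply: leq_sum => k _; apply: prefix_count_succ_le.
rewrite -(prednK v_gt0).
apply: (eq_leq_sum (r := index_iota 0 max_entry) (f := fun k => P i.+1 k.+2)
                   (g := fun k => P i k.+1)) => [k||].
- exact: prefix_count_succ_le.
- by have := row_size_balance lt_i_T; lia.
- by rewrite mem_index_iota.
Qed.

Lemma prefix_count_rigid :
  (forall i, i < size T -> P i.+1 1 <= size (row i)) ->
  forall i v, i <= size T ->
  P i v = if 0 < v <= i then nth 0 nu (i - v) - nth 0 kap (i - v) else 0.
Proof.
move=> ones_le_row; elim=> [|i IH] v le_i_T; first by rewrite /prefix_count take0; case: v.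
case: v => [|[|v]] /=; first by rewrite prefix_count0.
  rewrite subn1 -LR_size_row; apply/eqP; rewrite eqn_leq ones_le_row //.
  exact: size_row_le_ones.
rewrite prefix_count_shift ?ones_le_row // IH; last exact: ltnW.
by rewrite subSS.
Qed.

Lemma count_ones_row_succ i :
  sorted (fun x y => y <= x) kap -> sorted (fun x y => y <= x) nu -> i.+1 < size nu ->
  count_mem 1 (row i.+1) <= nth 0 kap i - nth 0 kap i.+1.
Proof.
move=> kap_sorted nu_sorted lt_i1_nu; set g := nth 0 kap i - nth 0 kap i.+1.
have [lt_g_row|] := ltnP g (size (row i.+1)); last exact: leq_trans (count_size _ _).
have := count_mem1_sorted (LR_row_sorted i.+1) (LR_row_pos i.+1) lt_g_row; apply.
have le_kap := sorted_geq_nth kap_sorted (leqnSn i).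
have le_nu := sorted_geq_nth nu_sorted (leqnSn i).
have lt_kap_nu1 : nth 0 kap i < nth 0 nu i.+1 by move: lt_g_row; rewrite LR_size_row; lia.
have := LR_column_lt lt_i1_nu lt_kap_nu1 (leqnn _) le_kap.
rewrite /entry subnn -/g; apply: leq_ltn_trans.
have /allP := LR_row_pos i; apply; apply: mem_nth.
by rewrite LR_size_row; lia.
Qed.

Lemma ones_prefix_bound i :
  sorted (fun x y => y <= x) kap -> sorted (fun x y => y <= x) nu -> i < size nu ->
  P i.+1 1 <= nth 0 nu 0 - nth 0 kap i.
Proof.
move=> kap_sorted nu_sorted; elim: i => [|i IH] lt_i_nu.
  by rewrite prefix_count_rcons ?LR_size // /prefix_count take0 add0n -LR_size_row count_size.
rewrite prefix_count_rcons ?LR_size //.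
have := IH (ltnW lt_i_nu); have := count_ones_row_succ kap_sorted nu_sorted lt_i_nu.
have := sorted_geq_nth kap_sorted (leqnSn i); have := sorted_geq_nth nu_sorted (leq0n i).
have /subpartP/(_ i) := LR_subpart; lia.
Qed.

Lemma LR_skew_row_le i : nth 0 nu i - nth 0 kap i <= nth 0 lam 0.
Proof.
rewrite -LR_size_row -LR_content; have [lt_i_T|le_T_i] := ltnP i (size T).
  exact: leq_trans (size_row_le_ones lt_i_T) (prefix_count_le _ _ _).
by rewrite nth_default.
Qed.

Lemma LR_sumn : all (fun x => 0 < x) kap -> sumn nu = sumn kap + sumn lam.
Proof.
move=> kap_pos; have /subpartP le_kap_nu := LR_subpart.
have lam_T : sumn lam = size (flatten T).
  rewrite (sumn_nth (leq_maxl _ max_entry)).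
  rewrite -(@sum_count_mem (flatten T) (maxn (size lam) max_entry)).
    by apply: eq_bigr => k _; rewrite LR_content.
  by move=> x /LR_entry_range; rewrite leq_max => /andP[-> ->]; rewrite orbT.
have T_skew : size (flatten T) = \sum_(0 <= i < size nu) (nth 0 nu i - nth 0 kap i).
  rewrite size_flatten (sumn_nth (n := size nu)) ?size_map ?LR_size //.
  by apply: eq_big_nat => i /andP[_ lt_i_nu]; rewrite (nth_map [::]) ?LR_size // LR_size_row.
rewrite lam_T T_skew !(sumn_nth (n := size nu)) ?(size_subpart kap_pos LR_subpart) //.
by rewrite -big_split; apply: eq_bigr => i _ /=; rewrite subnKC.
Qed.

End LRTableau.

Lemma LR_rigid_eq kap lam1 lam2 nu T1 T2 :
  LR_tableau kap lam1 nu T1 -> LR_tableau kap lam2 nu T2 ->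
  (forall i, i < size T1 -> prefix_count T1 i.+1 1 <= size (nth [::] T1 i)) ->
  (forall i, i < size T2 -> prefix_count T2 i.+1 1 <= size (nth [::] T2 i)) ->
  T1 = T2.
Proof.
move=> T1_LR T2_LR rigid1 rigid2; have size_T2 := LR_size T2_LR.
apply: (@eq_from_nth _ [::]) => [|i]; first by rewrite (LR_size T1_LR).
rewrite (LR_size T1_LR) => lt_i_nu.
apply: (sorted_eq leq_trans anti_leq); rewrite ?(LR_row_sorted T1_LR) ?(LR_row_sorted T2_LR) //.
apply/allP => x _ /=; apply/eqP.
rewrite count_mem_row ?(LR_size T1_LR) // count_mem_row ?size_T2 //.
by rewrite !(prefix_count_rigid T1_LR rigid1) ?(prefix_count_rigid T2_LR rigid2)
   ?(LR_size T1_LR) ?size_T2 // ltnW.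
Qed.

Lemma leqif_sumn_subpart (s t : seq nat) :
  all (fun x => 0 < x) s -> all (fun x => 0 < x) t -> subpart s t ->
  sumn s <= sumn t ?= iff (s == t).
Proof.
move=> s_pos t_pos /[dup] /subpartP le_st /(size_subpart s_pos) le_size.
rewrite (sumn_nth le_size) (sumn_nth (leqnn _)).
split; first by apply: leq_sum => i _.
apply/eqP/eqP => [eq_sum|-> //]; apply: eq_from_nth0 => // i.
have [lt_i_t|le_t_i] := ltnP i (size t).
  by apply: (eq_leq_sum le_st eq_sum); rewrite mem_index_iota.
by rewrite !nth_default // (leq_trans le_size).
Qed.

Lemma compl_seq_sorted n m l : sorted (fun x y => y <= x) l ->
  sorted (fun x y => y <= x) [seq m - nth 0 l (n - 1 - i) | i <- iota 0 n].
Proof.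
move=> l_sorted; apply/(sortedP 0) => j; rewrite size_map size_iota => lt_j1_n.
have lt_j_n := ltnW lt_j1_n.
rewrite !(nth_map 0) ?size_iota // !nth_iota // !add0n.
by apply: leq_sub2l; apply: sorted_geq_nth => //; lia.
Qed.

Lemma nth_compl n m l k : sorted (fun x y => y <= x) l ->
  nth 0 (compl n m l) k = if k < n then m - nth 0 l (n - 1 - k) else 0.
Proof.
move=> l_sorted; rewrite /compl nth_filter_pos ?compl_seq_sorted //.
have [lt_k_n|le_n_k] := ltnP k n; first by rewrite (nth_map 0) ?size_iota // nth_iota.
by rewrite nth_default // size_map size_iota.
Qed.

Lemma compl_partition n m l : sorted (fun x y => y <= x) l -> is_partition (compl n m l).
Proof.
move=> l_sorted; rewrite /is_partition filter_all andbT.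
exact/(sorted_filter geq_trans)/compl_seq_sorted.
Qed.

Lemma size_compl n m l : size (compl n m l) <= n.
Proof. by rewrite size_filter (leq_trans (count_size _ _)) ?size_map ?size_iota. Qed.

Lemma size_compl_full n m l :
  (forall i, i < n -> nth 0 l i < m) -> size (compl n m l) = n.
Proof.
move=> lt_l_m; rewrite /compl; set raw := map _ _.
have /all_filterP-> : all (fun x => 0 < x) raw; last by rewrite size_map size_iota.
apply/allP => x /mapP[i]; rewrite mem_iota add0n => /andP[_ lt_i_n] ->.
by rewrite subn_gt0 lt_l_m //; lia.
Qed.

Lemma compl_width0 n l : compl n 0 l = [::].
Proof.
by rewrite /compl filter_map (eq_filter (a2 := pred0)) ?filter_pred0 // => i /=; rewrite sub0n.
Qed.

Lemma nth_padd m n i : nth 0 (padd m n) i = nth 0 m i + nth 0 n i.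
Proof.
rewrite /padd; have [lt_i_max|] := ltnP i (maxn (size m) (size n)); first by rewrite nth_mkseq.
by rewrite geq_max => /andP[le_m_i le_n_i]; rewrite !nth_default ?size_mkseq ?geq_max ?le_m_i.
Qed.

Lemma padd_pos m n : all (fun x => 0 < x) m -> all (fun x => 0 < x) n ->
  all (fun x => 0 < x) (padd m n).
Proof.
move=> m_pos n_pos; apply: all_pos_nth => i; rewrite size_mkseq nth_padd leq_max.
by rewrite !(size_gt_nth0 _ m_pos, size_gt_nth0 _ n_pos) addn_gt0.
Qed.

Lemma box_pos n m : all (fun x => 0 < x) (box n m).
Proof. by case: m => [|m] //=; rewrite all_nseq orbT. Qed.

Section ComplementOfBox.
Variables a b c d : nat.
Local Notation N := (compl (a + c) (b + d) (box c d)).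

Lemma nth_compl_box i : nth 0 N i = if i < a then b + d else if i < a + c then b else 0.
Proof.
rewrite nth_compl ?box_sorted // nth_box.
by case: (ltnP i (a + c)) => ?; case: (ltnP i a) => ?; case: (ltnP (a + c - 1 - i) c) => ?; lia.
Qed.

Lemma compl_box_partition : is_partition N.
Proof. exact/compl_partition/box_sorted. Qed.

Lemma subpart_compl_box : subpart N (box (a + c) (b + d)).
Proof.
apply/subpartP => i; rewrite nth_compl_box nth_box.
by case: (ltnP i a) => ?; case: (ltnP i (a + c)) => ?; lia.
Qed.

Lemma size_compl_box : 0 < b -> size N = a + c.
Proof. by move=> b_gt0; apply: size_compl_full => i _; rewrite nth_box; case: ifP; lia. Qed.

Lemma sumn_compl_box : sumn N = a * d + a * b + c * b.
Proof.
rewrite (sumn_nth (size_compl _ _ _)) (big_cat_nat _ (leq_addr c a)) //=.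
rewrite (@eq_big_nat _ _ _ 0 a _ (fun=> b + d)); last first.
  by move=> i /andP[_ lt_i_a]; rewrite nth_compl_box lt_i_a.
rewrite (@eq_big_nat _ _ _ a (a + c) _ (fun=> b)); last first.
  by move=> i /andP[le_a_i lt_i_ac]; rewrite nth_compl_box ltnNge le_a_i lt_i_ac.
by rewrite !sum_nat_const_nat addKn subn0; lia.
Qed.

End ComplementOfBox.

Lemma map_sub_filterE (l : seq nat) d :
  [seq x - d | x <- l & d < x] = [seq x <- [seq x - d | x <- l] | 0 < x].
Proof. by rewrite filter_map; congr map; apply: eq_filter => x /=; rewrite subn_gt0. Qed.

Lemma sorted_map_subn (l : seq nat) d : sorted (fun x y => y <= x) l ->
  sorted (fun x y => y <= x) [seq x - d | x <- l].
Proof. by apply: homo_sorted => x y; apply: leq_sub2r. Qed.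

Lemma map_sub_filter_partition (l : seq nat) d : sorted (fun x y => y <= x) l ->
  is_partition [seq x - d | x <- l & d < x].
Proof.
move=> l_sorted; rewrite map_sub_filterE /is_partition filter_all andbT.
exact/(sorted_filter geq_trans)/sorted_map_subn.
Qed.

Lemma nth_map_sub_filter (l : seq nat) d j : sorted (fun x y => y <= x) l ->
  nth 0 [seq x - d | x <- l & d < x] j = nth 0 l j - d.
Proof.
move=> l_sorted; rewrite map_sub_filterE nth_filter_pos ?sorted_map_subn //.
have [lt_j_l|le_l_j] := ltnP j (size l); first by rewrite (nth_map 0).
by rewrite !nth_default ?size_map.
Qed.

Lemma uniq_fillings rs n : uniq (fillings rs n).
Proof.
have uniq_words k : uniq (words k n).
  elim: k => [|k IH] //=; apply: allpairs_uniq => //; first exact: iota_uniq.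
  by move=> [x1 w1] [x2 w2] _ _ /= [-> ->].
elim: rs => [|r rs IH] //=; apply: allpairs_uniq => //.
by move=> [x1 w1] [x2 w2] _ _ /= [-> ->].
Qed.

Lemma LRcoef_le1 kap lam nu :
  (forall T1 T2, LR_tableau kap lam nu T1 -> LR_tableau kap lam nu T2 -> T1 = T2) ->
  LRcoef kap lam nu <= 1.
Proof.
move=> uniq_LR; rewrite /LRcoef; case: ifP => // _; set s := fillings _ _.
have [/hasP[T _ T_LR]|] := boolP (has (LR_tableau kap lam nu) s); last first.
  by rewrite has_count -leqNgt => /leq_trans->.
rewrite (eq_in_count (a2 := pred1 T)) ?count_uniq_mem ?uniq_fillings ?leq_b1 // => T' _ /=.
by apply/idP/eqP => [/uniq_LR/(_ T_LR)|->].
Qed.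

Lemma cup_neq0 n m kap lam nu : cup n m kap lam nu != 0 ->
  [/\ is_partition nu, subpart nu (box n m) & exists T, LR_tableau kap lam nu T].
Proof.
rewrite /cup; case: ifP => [/andP[nu_part nu_box]|_]; last by rewrite eqxx.
rewrite /LRcoef; case: ifP => _; last by rewrite eqxx.
by rewrite -lt0n -has_count => /hasP[T _ T_LR]; split=> //; exists T.
Qed.

Section LRIntoComplementOfBox.
Variables (a b c d : nat) (kap lam : seq nat).
Hypotheses (kap_part : is_partition kap) (size_kap : size kap <= a).
Hypothesis lam0_le_b : nth 0 lam 0 <= b.
Local Notation N := (compl (a + c) (b + d) (box c d)).
Local Notation alpha := [seq x - d | x <- kap & d < x].

Let kap_sorted : sorted (fun x y => y <= x) kap. Proof. by case/andP: kap_part. Qed.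
Let kap_pos : all (fun x => 0 < x) kap. Proof. by case/andP: kap_part. Qed.

Lemma nth_kap_eq0 i : a <= i -> nth 0 kap i = 0.
Proof. by move=> le_a_i; rewrite nth_default // (leq_trans size_kap). Qed.

Lemma LR_subpart_compl_box nu T : LR_tableau kap lam nu T ->
  subpart nu (box (a + c) (b + d)) -> subpart nu N.
Proof.
move=> T_LR /subpartP nu_box; apply/subpartP => i.
have := LR_skew_row_le T_LR i; have := nu_box i; rewrite nth_compl_box nth_box.
case: (ltnP i a) => [lt_i_a|/nth_kap_eq0->]; first by rewrite (leq_trans lt_i_a (leq_addr c a)).
by case: ifP; lia.
Qed.

Lemma LR_sumn_leqif nu T :
  is_partition nu -> LR_tableau kap lam nu T ->
  subpart nu (box (a + c) (b + d)) ->
  sumn kap + sumn lam <= a * d + a * b + c * b ?= iff (nu == N).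
Proof.
move=> /andP[_ nu_pos] T_LR nu_box.
rewrite -(LR_sumn T_LR kap_pos) -(sumn_compl_box a b c d).
apply: leqif_sumn_subpart => //; first by case/andP: (compl_box_partition a b c d).
exact: LR_subpart_compl_box T_LR nu_box.
Qed.

Section OnComplementOfBox.
Variable T : seq (seq nat).
Hypothesis T_LR : LR_tableau kap lam N T.

Lemma LR_compl_box_rigid i : i < size T -> prefix_count T i.+1 1 <= size (nth [::] T i).
Proof.
have /andP[N_sorted N_pos] := compl_box_partition a b c d.
move=> lt_i_T; have lt_i_N : i < size N by rewrite -(LR_size T_LR).
rewrite (LR_size_row T_LR) nth_compl_box; case: (ltnP i a) => [lt_i_a|le_a_i].
  have := ones_prefix_bound T_LR kap_sorted N_sorted lt_i_N.
  by rewrite nth_compl_box (leq_ltn_trans (leq0n i) lt_i_a).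
have := prefix_count_le T i.+1 1; rewrite (LR_content T_LR) nth_kap_eq0 // subn0.
move: lt_i_N; rewrite (size_gt_nth0 _ N_pos) nth_compl_box (ltnNge i a) le_a_i /=.
by case: ifP => // _ _ le_ones_lam0; apply: leq_trans le_ones_lam0 lam0_le_b.
Qed.

Lemma d_le_nth_kap i : i < a -> d <= nth 0 kap i.
Proof. by move=> lt_i_a; have := LR_skew_row_le T_LR i; rewrite nth_compl_box lt_i_a; lia. Qed.

Lemma lam_nth_compl_box k : 0 < b -> nth 0 lam k =
  if k < a + c then nth 0 N (a + c - k.+1) - nth 0 kap (a + c - k.+1) else 0.
Proof.
move=> b_gt0; rewrite -(LR_content T_LR) -prefix_count_size.
by rewrite (prefix_count_rigid T_LR LR_compl_box_rigid) // (LR_size T_LR) size_compl_box.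
Qed.

Lemma kap_eq_padd : kap = padd (box a d) alpha.
Proof.
apply: eq_from_nth0 => //.
  by apply: padd_pos (box_pos a d) _; case/andP: (map_sub_filter_partition d kap_sorted).
move=> i; rewrite nth_padd nth_map_sub_filter // nth_box.
by case: (ltnP i a) => [/d_le_nth_kap|/nth_kap_eq0->]; lia.
Qed.

Lemma lam_eq_pcat : is_partition lam -> lam = pcat (box c b) (compl a b alpha).
Proof.
case/andP=> lam_sorted lam_pos; rewrite /pcat.
have [b0|b_gt0] := posnP b.
  suff -> : lam = [::] by rewrite b0 compl_width0.
  by move: lam0_le_b lam_pos; rewrite b0; case: (lam) => //= x l; rewrite leqn0 => /eqP->.
suff lam_L : lam = box c b ++ compl a b alpha by rewrite -lam_L (sorted_sort geq_trans).
have alpha_sorted : sorted (fun x y => y <= x) alpha.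
  by case/andP: (map_sub_filter_partition d kap_sorted).
apply: eq_from_nth0 => // [|k].
  by rewrite all_cat box_pos filter_all.
have -> : box c b = nseq c b by rewrite /box; case: (b) b_gt0.
rewrite lam_nth_compl_box // nth_compl_box nth_cat size_nseq nth_nseq.
rewrite (nth_compl _ _ _ alpha_sorted) nth_map_sub_filter //.
case: (ltnP k c) => [lt_k_c|le_c_k].
  have lt_k_ac : k < a + c by lia.
  have le_a_j : a <= a + c - k.+1 by lia.
  have lt_j_ac : a + c - k.+1 < a + c by lia.
  by rewrite lt_k_ac (ltnNge _ a) le_a_j lt_j_ac nth_kap_eq0 // subn0.
case: (ltnP k (a + c)) => [lt_k_ac|le_ac_k]; last first.
  by rewrite (ltnNge _ a) (_ : a <= k - c) //; lia.
have lt_j_a : a + c - k.+1 < a by lia.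
have -> : a - 1 - (k - c) = a + c - k.+1 by lia.
rewrite lt_j_a (_ : k - c < a) //; last by lia.
by have := d_le_nth_kap lt_j_a; lia.
Qed.

End OnComplementOfBox.

Lemma alpha_subpart : subpart kap (box (a + c) (b + d)) -> subpart alpha (box a b).
Proof.
move=> /subpartP kap_box; apply/subpartP => i.
rewrite nth_map_sub_filter // !nth_box; case: (ltnP i a) => [lt_i_a|/nth_kap_eq0->//].
by have := kap_box i; rewrite nth_box (leq_trans lt_i_a (leq_addr c a)); lia.
Qed.

Lemma cup_neq0_leqif nu : cup (a + c) (b + d) kap lam nu != 0 ->
  psize kap + psize lam <= a * d + a * b + c * b ?= iff (nu == N).
Proof. by case/cup_neq0=> nu_part nu_box [T T_LR]; apply: LR_sumn_leqif T_LR nu_box. Qed.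

Lemma cup_compl_box_le1 : cup (a + c) (b + d) kap lam N <= 1.
Proof.
rewrite /cup; case: ifP => // _; apply: LRcoef_le1 => T1 T2 T1_LR T2_LR.
exact: LR_rigid_eq T1_LR T2_LR (LR_compl_box_rigid T1_LR) (LR_compl_box_rigid T2_LR).
Qed.

Lemma LR_compl_box_decomposition T :
  is_partition lam -> subpart kap (box (a + c) (b + d)) -> LR_tableau kap lam N T ->
  exists alpha, [/\ is_partition alpha, subpart alpha (box a b),
                   kap = padd (box a d) alpha & lam = pcat (box c b) (compl a b alpha)].
Proof.
move=> lam_part kap_box T_LR; exists alpha; split.
- exact: map_sub_filter_partition.
- exact: alpha_subpart.
- exact: kap_eq_padd T_LR.
- exact: lam_eq_pcat T_LR lam_part.
Qed.

End LRIntoComplementOfBox.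

Unset Implicit Arguments.

Theorem lemma2p3 (a b c d : nat) (kap lam : seq nat) :
  is_partition kap -> is_partition lam ->
  subpart kap (box (a + c) (b + d)) -> subpart lam (box (a + c) (b + d)) ->
  size kap <= a -> nth 0 lam 0 <= b ->
  (a * d + a * b + c * b < psize kap + psize lam ->
     forall nu, cup (a + c) (b + d) kap lam nu = 0)
  /\
  (psize kap + psize lam = a * d + a * b + c * b ->
   (exists nu, cup (a + c) (b + d) kap lam nu != 0) ->
     (forall nu, cup (a + c) (b + d) kap lam nu
                 = sigma (a + c) (b + d) (compl (a + c) (b + d) (box c d)) nu)
     /\ exists alpha, [/\ is_partition alpha, subpart alpha (box a b),
                          kap = padd (box a d) alpha &
                          lam = pcat (box c b) (compl a b alpha)]).
Proof.
move=> kap_part lam_part kap_box _ size_kap lam0_le_b.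
have leqif_nu := cup_neq0_leqif (c := c) (d := d) kap_part size_kap lam0_le_b.
split=> [too_big nu | tight [nu0 nu0_neq0]].
  by apply/eqP; apply: contraTT too_big => /leqif_nu/leq_of_leqif; rewrite -leqNgt.
have nu_N nu : cup (a + c) (b + d) kap lam nu != 0 -> nu = compl (a + c) (b + d) (box c d).
  by move=> /leqif_nu leqif_sum; apply/eqP; rewrite -leqif_sum.2 tight.
have nu0_N := nu_N _ nu0_neq0; subst nu0.
have /cup_neq0[_ _ [T T_LR]] := nu0_neq0.
split=> [nu|]; last exact: LR_compl_box_decomposition T_LR.
rewrite /sigma subpart_compl_box andbT; case: eqVneq => [->|nu_neqN].
  by apply/eqP; rewrite eqn_leq cup_compl_box_le1 // lt0n.
by apply/eqP; apply: contraNT nu_neqN => /nu_N->.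
Qed.
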